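(* Let $G$ be a finite set of items, $k=|G|$, and $1\le m\le k$. Then there exist quasi-fields $\Sigma,\Sigma'\subseteq 2^G$ with $|\Sigma|=|\Sigma'|=2^m$, a set of agents, and a type profile $\theta$ such that $$\frac{W_{\max}(\theta^{\Sigma})}{W_{\max}(\theta^{\Sigma'})}\ge\frac{m}{\lceil m^2/k\rceil}.$$
   Context: Combinatorial auction: a finite set $G$ of items and agents $N$; an outcome assigns pairwise disjoint bundles $o_i\subseteq G$ to the agents. A type $\theta_i$ of agent $i$ is a valuation $v_i(\cdot,\theta_i):2^G\to\mathbb{R}_{\ge0}$ with $v_i(\emptyset,\theta_i)=0$ and $v_i(B,\theta_i)\le v_i(C,\theta_i)$ whenever $B\subseteq C$. For a profile $x$ of bid functions $x_i:2^G\to\mathbb{R}$, $W_{\max}(x)=\max_{o}\sum_i x_i(o_i)$ over all outcomes $o$. A set $\Sigma\subseteq 2^G$ with $\emptyset\in\Sigma$ is a quasi-field if $B\in\Sigma$ implies $G\setminus B\in\Sigma$, and $B,C\in\Sigma$ with $B\cap C=\emptyset$ implies $B\cup C\in\Sigma$. For a quasi-field $\Sigma$ the projection of a valuation $x_i$ is $x_i^\Sigma(B)=\max_{B'\in\Sigma,\,B'\subseteq B}x_i(B')$, and $\theta^\Sigma$ denotes the profile of projected true valuations $(v_i(\cdot,\theta_i)^\Sigma)_{i}$. *)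

From mathcomp Require Import all_boot all_order all_algebra.
Set Implicit Arguments. Unset Strict Implicit. Unset Printing Implicit Defensive.
Import Order.TTheory GRing.Theory Num.Theory.
Local Open Scope ring_scope.

Section CA.
Variables (R : realFieldType) (G : finType).

Definition valuation (v : {set G} -> R) : Prop :=
  [/\ v set0 = 0, (forall B, 0 <= v B) & (forall B C : {set G}, B \subset C -> v B <= v C)].

Definition quasi_field (S : {set {set G}}) : Prop :=
  [/\ set0 \in S,
      (forall B : {set G}, B \in S -> ~: B \in S) &
      (forall B C : {set G}, B \in S -> C \in S -> [disjoint B & C] -> B :|: C \in S)].

(* Projection x^Sigma(B) = max_{B' in Sigma, B' \subset B} x(B').
   When set0 \in S the range is nonempty and contains set0, so using x set0
   as the initial value gives exactly this maximum. *)
Definition projection (S : {set {set G}}) (x : {set G} -> R) (B : {set G}) : R :=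
  \big[Num.max/(x set0)]_(B' in S | B' \subset B) x B'.

Definition outcome (n : nat) (o : {ffun 'I_n -> {set G}}) : bool :=
  [forall i, forall j, (i != j) ==> [disjoint o i & o j]].

(* W_max(x) = max over outcomes o of sum_i x_i(o_i).  The all-empty outcome is
   always an outcome, so its value is a valid initial value for the max. *)
Definition Wmax (n : nat) (x : 'I_n -> {set G} -> R) : R :=
  \big[Num.max/(\sum_(i < n) x i set0)]_(o | outcome o) \sum_(i < n) x i (o i).

Definition proj_profile (n : nat) (S : {set {set G}}) (v : 'I_n -> {set G} -> R)
  : 'I_n -> {set G} -> R := fun i => projection S (v i).

End CA.

Definition ceil_div (a b : nat) : nat := ((a + b).-1 %/ b)%N.

From mathcomp Require Import all_boot all_order all_algebra.
From mathcomp Require Import zify.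
Import Order.TTheory GRing.Theory Num.Theory.
Local Open Scope ring_scope.
Set Implicit Arguments. Unset Strict Implicit. Unset Printing Implicit Defensive.

(* Rank the k items 0, ..., k-1 and call the first m of them markers. Agent i
   is single-minded for the i-th block of a partition [spread] of the items
   separating the markers; under the quasi-field of unions of its blocks every
   agent receives its block, so the welfare is m. A second partition [crowd]
   into m blocks lumps the markers into only h = ceil(m^2/k) blocks, the
   remaining k - m >= m - h items (as (m - k)^2 >= 0) filling the others. A
   union of crowd-blocks containing agent i's block contains the whole
   crowd-block of marker i, so disjoint bundles serve at most one agent per
   such block: the welfare is at most h. *)

Section Preimsets.
Variables (G I : finType) (phi : G -> I).

Definition preimsets : {set {set G}} :=
  [set phi @^-1: T | T : {set I} in powerset [set: I]].

Lemma mem_preimsets (T : {set I}) : phi @^-1: T \in preimsets.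
Proof. by apply: imset_f; rewrite powersetE subsetT. Qed.

Lemma preimsetsP (U : {set G}) : U \in preimsets -> exists T : {set I}, U = phi @^-1: T.
Proof. by case/imsetP => T _ ->; exists T. Qed.

Lemma quasi_field_preimsets : quasi_field preimsets.
Proof.
split.
- by rewrite -(preimset0 phi) mem_preimsets.
- by move=> B /preimsetsP [T ->]; rewrite -preimsetC mem_preimsets.
- move=> B C /preimsetsP [T ->] /preimsetsP [T' ->] _.
  by rewrite -preimsetU mem_preimsets.
Qed.

Lemma card_preimsets : (forall j, exists x, phi x = j) -> #|preimsets| = (2 ^ #|I|)%N.
Proof.
move=> phi_onto; rewrite card_in_imset ?card_powerset ?cardsT // => T T' _ _ eqTT'.
apply/setP => j; have [x <-] := phi_onto j.
by have := congr1 (fun U : {set G} => x \in U) eqTT'; rewrite /= !inE.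
Qed.

End Preimsets.

Section Projection.
Variables (R : realFieldType) (G : finType) (S : {set {set G}}) (x : {set G} -> R).

Lemma projection_ge (B B' : {set G}) : B' \in S -> B' \subset B -> x B' <= projection S x B.
Proof.
by move=> SB' sB'B; rewrite /projection (bigD1 B') ?SB' ?sB'B //= le_max lexx.
Qed.

Lemma projection_le (B : {set G}) (c : R) :
  (forall B', B' \in S -> B' \subset B -> x B' <= c) -> x set0 <= c ->
  projection S x B <= c.
Proof.
move=> xS_le x0_le; apply: (big_ind (fun y => y <= c)) => //.
- by move=> a b ha hb; rewrite ge_max ha hb.
- by move=> B' /andP[]; apply: xS_le.
Qed.

End Projection.

Section Welfare.
Variables (R : realFieldType) (G : finType) (n : nat).

Lemma outcomeP (o : {ffun 'I_n -> {set G}}) :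
  reflect (forall i j, i != j -> [disjoint o i & o j]) (outcome o).
Proof.
apply: (iffP forallP) => [o_disj i j | o_disj i].
  by move/forallP: (o_disj i) => /(_ j) /implyP.
by apply/forallP => j; apply/implyP; apply: o_disj.
Qed.

Lemma outcome_set0 : outcome [ffun _ : 'I_n => set0 : {set G}].
Proof. by apply/outcomeP => i j _; rewrite -setI_eq0 !ffunE set0I. Qed.

Lemma outcome_single (j : 'I_n) (B : {set G}) :
  outcome [ffun i => if i == j then B else set0].
Proof.
apply/outcomeP => i i' neq_ii'; rewrite !ffunE -setI_eq0.
case: (i =P j) => [eij|_]; last by rewrite set0I.
case: (i' =P j) => [ei'j|_]; last by rewrite setI0.
by rewrite eij ei'j eqxx in neq_ii'.
Qed.

Lemma outcome_preimset1 (phi : G -> 'I_n) : outcome [ffun i => phi @^-1: [set i]].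
Proof.
apply/outcomeP => i j neq_ij; apply/pred0P => l /=; rewrite !ffunE !inE.
by apply/negP => /andP[/eqP-> /eqP eij]; rewrite eij eqxx in neq_ij.
Qed.

Variable x : 'I_n -> {set G} -> R.

Lemma Wmax_ge (o : {ffun 'I_n -> {set G}}) : outcome o -> \sum_(i < n) x i (o i) <= Wmax x.
Proof. by move=> o_out; rewrite /Wmax (bigD1 o) //= le_max lexx. Qed.

Lemma Wmax_le (c : R) :
  (forall o : {ffun 'I_n -> {set G}}, outcome o -> \sum_(i < n) x i (o i) <= c) ->
  Wmax x <= c.
Proof.
move=> sum_le; apply: (big_ind (fun y => y <= c)).
- by have := sum_le _ outcome_set0; under eq_bigr do rewrite ffunE.
- by move=> a b ha hb; rewrite ge_max ha hb.
- by move=> o o_out; apply: sum_le.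
Qed.

End Welfare.

Lemma ler_nat_of_bool (R : numDomainType) (b c : bool) : (b -> c) -> (b%:R : R) <= c%:R.
Proof. by case: b c => [] [] // /(_ isT). Qed.

Section SingleMinded.
Variables (R : realFieldType) (G : finType).

Definition single_minded (A B : {set G}) : R := (A \subset B)%:R.

Lemma valuation_single_minded (A : {set G}) : A != set0 -> valuation (single_minded A).
Proof.
move=> A_neq0; split=> [|B|B C sBC]; rewrite /single_minded ?ler0n //.
  by rewrite subset0 (negbTE A_neq0).
by apply: ler_nat_of_bool => sAB; apply: subset_trans sAB sBC.
Qed.

Variables (n : nat) (A : 'I_n -> {set G}).

Definition served (S : {set {set G}}) (o : {ffun 'I_n -> {set G}}) : {set 'I_n} :=
  [set i | [exists U in S, (U \subset o i) && (A i \subset U)]].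

Lemma projection_single_minded_le (S : {set {set G}}) (o : {ffun 'I_n -> {set G}}) i :
  set0 \in S ->
  projection S (single_minded (A i)) (o i) <= (i \in served S o)%:R.
Proof.
move=> S0.
have le_served U :
    U \in S -> U \subset o i -> single_minded (A i) U <= (i \in served S o)%:R.
  move=> SU sUo; apply: ler_nat_of_bool => sAU.
  by rewrite inE; apply/exists_inP; exists U; rewrite ?sUo.
by apply: projection_le => //; apply: le_served; rewrite ?sub0set.
Qed.

Lemma card_served_preimsets (I : finType) (phi : G -> I) (y : 'I_n -> G) (C : {set I})
    (o : {ffun 'I_n -> {set G}}) :
  (forall i, y i \in A i) -> (forall i, phi (y i) \in C) -> outcome o ->
  (#|served (preimsets phi) o| <= #|C|)%N.
Proof.
move=> yA yC /outcomeP o_disj.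
have phi_y_inj : {in served (preimsets phi) o &, injective (phi \o y)}.
  move=> i j; rewrite !inE => /exists_inP [U SU /andP[sUo sAU]].
  move=> /exists_inP [V _ /andP[sVo sAV]] /= eq_phi; apply/eqP/negPn/negP => neq_ij.
  have [T defU] := preimsetsP SU.
  have yjU : y j \in U.
    by move/subsetP: sAU => /(_ _ (yA i)); rewrite defU !inE eq_phi.
  have yj_oi : y j \in o i by apply: (subsetP sUo).
  have yj_oj : y j \in o j by apply: (subsetP sVo); apply: (subsetP sAV).
  by rewrite (disjointFr (o_disj i j neq_ij) yj_oi) in yj_oj.
rewrite -(card_in_imset phi_y_inj); apply: subset_leq_card.
by apply/subsetP => _ /imsetP[i _ ->]; apply: yC.
Qed.

Lemma Wmax_single_minded_preimsets_le (I : finType) (phi : G -> I) (y : 'I_n -> G)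
    (C : {set I}) :
  (forall i, y i \in A i) -> (forall i, phi (y i) \in C) ->
  Wmax (proj_profile (preimsets phi) (fun i => single_minded (A i))) <= #|C|%:R.
Proof.
move=> yA yC; apply: Wmax_le => o o_out.
have S0 : set0 \in preimsets phi by rewrite -(preimset0 phi) mem_preimsets.
apply: le_trans (ler_sum _ (fun i _ => projection_single_minded_le o i S0)) _.
rewrite -natr_sum ler_nat; apply: leq_trans (card_served_preimsets yA yC o_out).
by rewrite -sum1_card [X in (_ <= X)%N]big_mkcond; apply: leq_sum => i _; case: ifP.
Qed.

Lemma Wmax_single_minded_ge (S : {set {set G}}) :
  outcome [ffun i => A i] -> (forall i, A i \in S) ->
  n%:R <= Wmax (proj_profile S (fun i => single_minded (A i))).
Proof.
move=> A_out SA; apply: le_trans (Wmax_ge _ A_out).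
rewrite -[n in n%:R]card_ord -sumr_const; apply: ler_sum => i _; rewrite ffunE.
by apply: le_trans (projection_ge _ (SA i) (subxx _)); rewrite /single_minded subxx.
Qed.

Lemma Wmax_single_minded_ge1 (S : {set {set G}}) (j : 'I_n) :
  quasi_field S -> 1 <= Wmax (proj_profile S (fun i => single_minded (A i))).
Proof.
case=> S0 SC _; have ST : [set: G] \in S by rewrite -setC0 SC.
apply: le_trans (Wmax_ge _ (outcome_single j setT)).
rewrite (bigD1 j) //= ffunE eqxx -[1]addr0; apply: lerD.
  by apply: le_trans (projection_ge _ ST (subxx _)); rewrite /single_minded subsetT.
apply: sumr_ge0 => i _; apply: le_trans (projection_ge _ S0 (sub0set _)).
by rewrite /single_minded ler0n.
Qed.

End SingleMinded.

Lemma ceil_div_gt0 (a b : nat) : (0 < a)%N -> (0 < b)%N -> (0 < ceil_div a b)%N.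
Proof. by move=> a_gt0 b_gt0; rewrite /ceil_div divn_gt0 //; lia. Qed.

Lemma double_le_add_ceil_div_sqr (m k : nat) : (0 < k)%N ->
  (m * 2 <= k + ceil_div (m * m) k)%N.
Proof.
move=> k_gt0; have [|lt_k_2m] := leqP (m * 2) k; first lia.
suff : (m * 2 - k <= ceil_div (m * m) k)%N by lia.
rewrite /ceil_div leq_divRL //.
suff : ((m * 2 - k) * k <= m * m)%N by lia.
have [/subnK <-|/subnK <-] := leqP k m; nia.
Qed.

Lemma card_ord_lt (m h : nat) : (#|[set j : 'I_m | (j < h)%N]| <= h)%N.
Proof.
rewrite cardE -(size_map val) -[X in (_ <= X)%N](size_iota 0 h); apply: uniq_leq_size.
  by rewrite map_inj_uniq ?enum_uniq //; apply: val_inj.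
by move=> r /mapP[j]; rewrite mem_enum inE => j_lt ->; rewrite mem_iota.
Qed.

Definition spread_idx (m r : nat) : nat := if (r < m)%N then r else 0.

Definition crowd_idx (m h r : nat) : nat :=
  if (r < m)%N then minn r h.-1 else minn (r - m + h) m.-1.

Section Partitions.
Variables (G : finType) (m : nat).
Hypotheses (m_gt0 : (0 < m)%N) (m_le_card : (m <= #|G|)%N).

Lemma spread_idx_lt (r : nat) : (spread_idx m r < m)%N.
Proof. by rewrite /spread_idx; case: ifP. Qed.

Lemma crowd_idx_lt (h r : nat) : (crowd_idx m h r < m)%N.
Proof.
rewrite /crowd_idx; case: ifP => [r_lt_m | _].
  exact: leq_ltn_trans (geq_minl _ _) r_lt_m.
by apply: leq_ltn_trans (geq_minr _ _) _; rewrite ltn_predL.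
Qed.

Definition spread (x : G) : 'I_m := Ordinal (spread_idx_lt (enum_rank x)).

Definition crowd (x : G) : 'I_m :=
  Ordinal (crowd_idx_lt (ceil_div (m * m) #|G|) (enum_rank x)).

Definition marker (i : 'I_m) : G := enum_val (widen_ord m_le_card i).

Lemma enum_rank_marker (i : 'I_m) : enum_rank (marker i) = i :> nat.
Proof. by rewrite /marker enum_valK. Qed.

Lemma spread_marker (i : 'I_m) : spread (marker i) = i.
Proof. by apply: val_inj; rewrite /= /spread_idx enum_rank_marker ltn_ord. Qed.

Lemma crowd_marker_lt (i : 'I_m) : (crowd (marker i) < ceil_div (m * m) #|G|)%N.
Proof.
have : (0 < ceil_div (m * m) #|G|)%N by apply: ceil_div_gt0; lia.
rewrite /= /crowd_idx enum_rank_marker ltn_ord; set h := ceil_div _ _; lia.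
Qed.

Lemma crowd_onto (j : 'I_m) : exists x, crowd x = j.
Proof.
set h := ceil_div (m * m) #|G|.
have two_m_le : (m * 2 <= #|G| + h)%N by apply: double_le_add_ceil_div_sqr; lia.
pose r := if (j < h)%N then j : nat else (j - h + m)%N.
have r_lt : (r < #|G|)%N by rewrite /r; case: ifP; have := ltn_ord j; lia.
exists (enum_val (Ordinal r_lt)); apply: val_inj.
rewrite /= /crowd_idx enum_valK /= -/h /r.
by case: ifP; have := ltn_ord j; case: ifP; lia.
Qed.

End Partitions.

Theorem proposition4 (R : realFieldType) (G : finType) (m : nat) :
  (1 <= m)%N -> (m <= #|G|)%N ->
  exists (S S' : {set {set G}}) (n : nat) (v : 'I_n -> {set G} -> R),
    [/\ quasi_field S, quasi_field S', #|S| = (2 ^ m)%N & #|S'| = (2 ^ m)%N] /\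
    (forall i, valuation (v i)) /\
    0 < Wmax (proj_profile S' v) /\
    (m%:R / (ceil_div (m * m) #|G|)%:R
       <= Wmax (proj_profile S v) / Wmax (proj_profile S' v)).
Proof.
move=> m_gt0 m_le_card.
pose A (i : 'I_m) : {set G} := spread m_gt0 @^-1: [set i].
have marker_A i : marker m_le_card i \in A i by rewrite !inE spread_marker.
exists (preimsets (spread m_gt0)), (preimsets (crowd (G:=G) m_gt0)), m,
  (fun i => single_minded R (A i)).
split.
  split; try exact: quasi_field_preimsets; rewrite card_preimsets ?card_ord // => j.
  - by exists (marker m_le_card j); apply: spread_marker.
  - exact: crowd_onto.
split=> [i|].
  by apply: valuation_single_minded; apply/set0Pn; exists (marker m_le_card i).
set W := Wmax (proj_profile (preimsets (spread _)) _).
set W' := Wmax (proj_profile (preimsets (crowd _)) _).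
have W'_ge1 : 1 <= W'.
  by apply: (Wmax_single_minded_ge1 _ _ (Ordinal m_gt0)); apply: quasi_field_preimsets.
have W'_le : W' <= (ceil_div (m * m) #|G|)%:R.
  set C := [set j : 'I_m | j < ceil_div (m * m) #|G|]%N.
  have crowd_marker_C i : crowd m_gt0 (marker m_le_card i) \in C.
    by rewrite inE crowd_marker_lt.
  apply: le_trans (Wmax_single_minded_preimsets_le R marker_A crowd_marker_C) _.
  by rewrite ler_nat card_ord_lt.
have W_ge : m%:R <= W.
  by apply: Wmax_single_minded_ge => [|i]; [apply: outcome_preimset1 | apply: mem_preimsets].
have W'_gt0 : 0 < W' by apply: lt_le_trans W'_ge1.
split=> //; apply: ler_pM => //; first by rewrite invr_ge0 ler0n.
by rewrite lef_pV2 ?posrE // (lt_le_trans W'_gt0 W'_le).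
Qed.
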